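(* Let $\vec r:\mathbb{Z}\to\mathbb{R}^2$ be a nondegenerate convex hexagon with parallel and equi-length opposite sides (closed with period $6$, simple, convex, $\vec t_{k+3}=-\vec t_k$ for all $k$). Then the iterates $\mathcal{P}(\vec r)$, $\mathcal{P}(\mathcal{P}(\vec r))$, $\mathcal{Q}(\vec r)$, $\mathcal{Q}(\mathcal{Q}(\vec r))$ are well defined and are again nondegenerate convex hexagons with parallel and equi-length opposite sides, and $\vec r$ is periodically stable under both maps: there exist integers $s,s'$ such that for all $n$ the centroaffine curvatures satisfy $\kappa_n(\mathcal{P}(\mathcal{P}(\vec r)))=\kappa_{n+s}(\vec r)$, $\bar\kappa_n(\mathcal{P}(\mathcal{P}(\vec r)))=\bar\kappa_{n+s}(\vec r)$, and $\kappa_n(\mathcal{Q}(\mathcal{Q}(\vec r)))=\kappa_{n+s'}(\vec r)$, $\bar\kappa_n(\mathcal{Q}(\mathcal{Q}(\vec r)))=\bar\kappa_{n+s'}(\vec r)$.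
   Context: A discrete planar curve is a map $\vec r:\mathbb{Z}\to\mathbb{R}^2$; $\vec r_k=\vec r(k)$, $\vec t_k=\vec r_{k+1}-\vec r_k$, $[\vec a,\vec b]$ the $2\times2$ determinant. Nondegenerate: $[\vec t_{k-1},\vec t_k]\ne0$ for all $k$. First and second centroaffine curvatures: $\kappa_k=\frac{[\vec t_k,\vec t_{k+1}]}{[\vec t_{k-1},\vec t_k]}$, $\bar\kappa_k=\frac{[\vec t_{k-1},\vec t_{k+1}]}{[\vec t_{k-1},\vec t_k]}$. Closed with period $q$: $\vec r(k+q)=\vec r(k)$ for all $k$, $q$ minimal; simple: the piecewise-linear interpolation is injective on $[k,k+q)$; convex: for each line through $\vec r_k,\vec r_{k+1}$, all vertices lie in one closed half-plane bounded by it. The pentagram image is $\mathcal{P}(\vec r)_k=$ the intersection point of the line through $\vec r_{k-1},\vec r_{k+1}$ with the line through $\vec r_k,\vec r_{k+2}$; the inverse pentagram image is $\mathcal{Q}(\vec r)_k=$ the intersection point of the line through $\vec r_{k-1},\vec r_k$ with the line through $\vec r_{k+1},\vec r_{k+2}$. *)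

From Stdlib Require Import Reals ZArith.
Open Scope R_scope.

Definition vec := (R * R)%type.
Definition vsub (a b : vec) : vec := (fst a - fst b, snd a - snd b).
Definition vadd (a b : vec) : vec := (fst a + fst b, snd a + snd b).
Definition vscale (c : R) (a : vec) : vec := (c * fst a, c * snd a).
Definition vopp (a : vec) : vec := (- fst a, - snd a).
Definition det (a b : vec) : R := fst a * snd b - snd a * fst b.

Definition curve := Z -> vec.

Definition tang (r : curve) (k : Z) : vec := vsub (r (k + 1)%Z) (r k).

Definition nondegenerate (r : curve) : Prop :=
  forall k : Z, det (tang r (k - 1)%Z) (tang r k) <> 0.

Definition kappa (r : curve) (k : Z) : R :=
  det (tang r k) (tang r (k + 1)%Z) / det (tang r (k - 1)%Z) (tang r k).

Definition kappabar (r : curve) (k : Z) : R :=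
  det (tang r (k - 1)%Z) (tang r (k + 1)%Z) / det (tang r (k - 1)%Z) (tang r k).

Definition closed_period (r : curve) (q : Z) : Prop :=
  (0 < q)%Z /\ (forall k, r (k + q)%Z = r k) /\
  (forall p, (0 < p < q)%Z -> exists k, r (k + p)%Z <> r k).

(* piecewise-linear interpolation at parameter j + u, with j integer, 0 <= u < 1 *)
Definition pl (r : curve) (j : Z) (u : R) : vec :=
  vadd (r j) (vscale u (tang r j)).

Definition simple (r : curve) (q : Z) : Prop :=
  forall k j1 j2 : Z, forall u1 u2 : R,
    (k <= j1 < k + q)%Z -> (k <= j2 < k + q)%Z ->
    0 <= u1 < 1 -> 0 <= u2 < 1 ->
    pl r j1 u1 = pl r j2 u2 -> j1 = j2 /\ u1 = u2.

Definition convex (r : curve) : Prop :=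
  forall k : Z,
    (forall j : Z, 0 <= det (tang r k) (vsub (r j) (r k))) \/
    (forall j : Z, det (tang r k) (vsub (r j) (r k)) <= 0).

(* The line through a,b and the line through c,d meet in exactly one point
   iff det(b-a, d-c) <> 0 (this forces a <> b and c <> d). *)
Definition lines_meet (a b c d : vec) : Prop :=
  det (vsub b a) (vsub d c) <> 0.

(* the intersection point of line ab with line cd (when lines_meet a b c d) *)
Definition meet (a b c d : vec) : vec :=
  vadd a (vscale (det (vsub c a) (vsub d c) / det (vsub b a) (vsub d c)) (vsub b a)).

Definition Pwd (r : curve) : Prop :=
  forall k : Z, lines_meet (r (k - 1)%Z) (r (k + 1)%Z) (r k) (r (k + 2)%Z).
Definition Pmap (r : curve) : curve :=
  fun k => meet (r (k - 1)%Z) (r (k + 1)%Z) (r k) (r (k + 2)%Z).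

Definition Qwd (r : curve) : Prop :=
  forall k : Z, lines_meet (r (k - 1)%Z) (r k) (r (k + 1)%Z) (r (k + 2)%Z).
Definition Qmap (r : curve) : curve :=
  fun k => meet (r (k - 1)%Z) (r k) (r (k + 1)%Z) (r (k + 2)%Z).

Definition par_hexagon (r : curve) : Prop :=
  nondegenerate r /\ closed_period r 6 /\ simple r 6 /\ convex r /\
  (forall k : Z, tang r (k + 3)%Z = vopp (tang r k)).

From Stdlib Require Import Reals ZArith Lra Lia.
Open Scope R_scope.

(* Write tau_k = [t_{k-1}, t_k] ([turn r k]), so that kappa_k = tau_{k+1} / tau_k
   and, for t_{k+3} = -t_k, kappabar_k = tau_{k-1} / tau_k; tau is then 3-periodic.
   Antiperiodicity makes the curve, seen from any vertex X, the hexagon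
   X, X+A, X+A+B, X+A+B+C, X+B+C, X+C, and such a curve is a convex hexagon
   exactly when all tau_k have one sign.  A direct computation on this hexagon
   shows that P and Q keep antiperiodicity and send tau_k to
   c * tau_k * tau_{k+1} for a constant c <> 0 (c = 1 / (tau_0 + tau_1 + tau_2)
   for P, c = sigma_2 / (tau_0 tau_1 tau_2) for Q).  Iterating twice gives
   turns proportional to tau_k tau_{k+1}^2 tau_{k+2}, i.e. to tau_{k+1}, so
   both curvatures are shifted by one. *)

Definition tang_antiperiodic (r : curve) : Prop :=
  forall k, tang r (k + 3)%Z = vopp (tang r k).

Definition turn (r : curve) (k : Z) : R := det (tang r (k - 1)) (tang r k).

Definition turns_same_sign (r : curve) : Prop :=
  forall k, 0 < turn r k * turn r (k + 1).

Definition consistently_oriented (A B C : vec) : Prop :=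
  (0 < det A B /\ 0 < det B C /\ 0 < det A C) \/
  (det A B < 0 /\ det B C < 0 /\ det A C < 0).

Definition hexagon (X A B C : vec) : curve := fun k =>
  match (k mod 6)%Z with
  | 0%Z => X
  | 1%Z => vadd X A
  | 2%Z => vadd (vadd X A) B
  | 3%Z => vadd (vadd (vadd X A) B) C
  | 4%Z => vadd (vadd X B) C
  | _ => vadd X C
  end.

Definition quadratic_turns (r r' : curve) : Prop :=
  exists c, c <> 0 /\ forall k, turn r' k = c * (turn r k * turn r (k + 1)).

Lemma periodic_add_mul {T} (f : Z -> T) p :
  (forall k, f (k + p)%Z = f k) -> forall k q, f (k + p * q)%Z = f k.
Proof.
  intros Hf k q; induction q as [|q IH|q IH] using Z.peano_ind.
  - now rewrite Z.mul_0_r, Z.add_0_r.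
  - now rewrite Z.mul_succ_r, Z.add_assoc, Hf.
  - rewrite <- IH, <- (Hf (k + p * Z.pred q)%Z), Z.mul_pred_r.
    f_equal; ring.
Qed.

Lemma Z_cases6 m : (0 <= m < 6)%Z ->
  (m = 0 \/ m = 1 \/ m = 2 \/ m = 3 \/ m = 4 \/ m = 5)%Z.
Proof. lia. Qed.

Lemma same_sign3 x y z : 0 < x * y -> 0 < y * z ->
  (0 < x /\ 0 < y /\ 0 < z) \/ (x < 0 /\ y < 0 /\ z < 0).
Proof.
  intros Hxy Hyz. destruct (Rlt_le_dec 0 y) as [Hy | Hy].
  - left. repeat split; nra.
  - assert (y <> 0) by (intros ->; lra). right. repeat split; nra.
Qed.

Ltac vec_ring :=
  unfold vadd, vsub, vopp, vscale; apply injective_projections; cbn [fst snd]; ring.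

Lemma curve_succ (r : curve) k : r (k + 1)%Z = vadd (r k) (tang r k).
Proof. unfold tang. vec_ring. Qed.

Lemma curve_next (r : curve) k j : j = (k + 1)%Z -> r j = vadd (r k) (tang r k).
Proof. intros ->. apply curve_succ. Qed.

Lemma hexagon_add6 X A B C k : hexagon X A B C (k + 6)%Z = hexagon X A B C k.
Proof. unfold hexagon. now rewrite <- Zplus_mod_idemp_r, Z.mod_same, Z.add_0_r. Qed.

Lemma hexagon_mod6 X A B C j : hexagon X A B C j = hexagon X A B C (j mod 6)%Z.
Proof. unfold hexagon. now rewrite Zmod_mod. Qed.

Lemma tang_antiperiodic_window r : tang_antiperiodic r -> forall k m, (0 <= m <= 6)%Z ->
  r (k + m)%Z = hexagon (r k) (tang r k) (tang r (k + 1)) (tang r (k + 2)) m.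
Proof.
  intros Hr k m Hm.
  set (X := r k); set (A := tang r k); set (B := tang r (k + 1)%Z); set (C := tang r (k + 2)%Z).
  assert (H3 : tang r (k + 3)%Z = vopp A) by apply Hr.
  assert (H4 : tang r (k + 4)%Z = vopp B).
  { unfold B. rewrite <- Hr. f_equal. ring. }
  assert (H5 : tang r (k + 5)%Z = vopp C).
  { unfold C. rewrite <- Hr. f_equal. ring. }
  assert (R1 : r (k + 1)%Z = vadd X A) by apply curve_succ.
  assert (R2 : r (k + 2)%Z = vadd (vadd X A) B).
  { rewrite (curve_next r (k + 1)) by ring. now rewrite R1. }
  assert (R3 : r (k + 3)%Z = vadd (vadd (vadd X A) B) C).
  { rewrite (curve_next r (k + 2)) by ring. now rewrite R2. }
  assert (R4 : r (k + 4)%Z = vadd (vadd X B) C).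
  { rewrite (curve_next r (k + 3)) by ring. rewrite R3, H3. vec_ring. }
  assert (R5 : r (k + 5)%Z = vadd X C).
  { rewrite (curve_next r (k + 4)) by ring. rewrite R4, H4. vec_ring. }
  assert (R6 : r (k + 6)%Z = X).
  { rewrite (curve_next r (k + 5)) by ring. rewrite R5, H5. vec_ring. }
  assert (m = 0 \/ m = 1 \/ m = 2 \/ m = 3 \/ m = 4 \/ m = 5 \/ m = 6)%Z
    as [-> | [-> | [-> | [-> | [-> | [-> | ->]]]]]] by lia;
    unfold hexagon; simpl; rewrite ?Z.add_0_r; assumption || reflexivity.
Qed.

Lemma tang_antiperiodic_period6 r : tang_antiperiodic r -> forall k, r (k + 6)%Z = r k.
Proof. intros Hr k. now rewrite (tang_antiperiodic_window r Hr k 6) by lia. Qed.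

Lemma tang_antiperiodic_hexagon r : tang_antiperiodic r -> forall k j,
  r (k + j)%Z = hexagon (r k) (tang r k) (tang r (k + 1)) (tang r (k + 2)) j.
Proof.
  intros Hr k j.
  assert (Hj : j = (j mod 6 + 6 * (j / 6))%Z) by (pose proof (Z.div_mod j 6); lia).
  rewrite Hj, Z.add_assoc, (periodic_add_mul r 6 (tang_antiperiodic_period6 r Hr)).
  rewrite (periodic_add_mul _ 6 (hexagon_add6 _ _ _ _)).
  apply tang_antiperiodic_window; [exact Hr|].
  pose proof (Z.mod_pos_bound j 6); lia.
Qed.

Lemma local_oriented_hexagon r : tang_antiperiodic r -> turns_same_sign r -> forall k,
  exists X A B C, consistently_oriented A B C /\
    forall j, r (k + j)%Z = hexagon X A B C j.
Proof.
  intros Hr Hs k.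
  exists (r k), (tang r k), (tang r (k + 1)%Z), (tang r (k + 2)%Z).
  split; [|apply tang_antiperiodic_hexagon, Hr].
  assert (T1 : turn r (k + 1) = det (tang r k) (tang r (k + 1))).
  { unfold turn. do 2 f_equal. ring. }
  assert (T2 : turn r (k + 1 + 1) = det (tang r (k + 1)) (tang r (k + 2))).
  { unfold turn. f_equal; f_equal; ring. }
  assert (T3 : turn r (k + 1 + 1 + 1) = det (tang r k) (tang r (k + 2))).
  { unfold turn. replace (k + 1 + 1 + 1 - 1)%Z with (k + 2)%Z by ring.
    replace (k + 1 + 1 + 1)%Z with (k + 3)%Z by ring. rewrite Hr.
    unfold det, vopp; cbn [fst snd]; ring. }
  pose proof (Hs (k + 1)%Z) as S1. pose proof (Hs (k + 1 + 1)%Z) as S2.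
  rewrite T1, T2 in S1. rewrite T2, T3 in S2.
  unfold consistently_oriented. now apply same_sign3.
Qed.

Lemma local_index (r h : curve) k : (forall j, r (k + j)%Z = h j) ->
  forall e j, e = (k + j)%Z -> r e = h j.
Proof. intros H e j ->. apply H. Qed.

(* Given [H : forall j, r (k + j) = hexagon X A B C j], rewrites each [r e]
   whose index is [k] plus a literal into the corresponding hexagon vertex. *)
Ltac localize r k H :=
  repeat match goal with
  | |- context [r ?e] =>
      lazymatch eval pattern k in e with
      | ?f _ => let j := eval cbv in (f 0%Z) in
                rewrite (local_index r _ k H e j) by ring
      end
  end;
  unfold hexagon; simpl.

Ltac coordinates :=
  repeat match goal with
  | v : vec |- _ => destruct v
  end;
  unfold consistently_oriented, lines_meet, meet, det, vadd, vsub, vscale, vopp in *;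
  cbn [fst snd] in *.

Lemma nondegenerate_of_same_sign r : turns_same_sign r -> nondegenerate r.
Proof.
  intros Hs k Hk. specialize (Hs k). unfold turn in Hs. rewrite Hk in Hs. lra.
Qed.

Lemma closed_period6_of_same_sign r : tang_antiperiodic r -> turns_same_sign r ->
  closed_period r 6.
Proof.
  intros Hr Hs. split; [lia | split; [apply tang_antiperiodic_period6, Hr |]].
  intros p Hp. exists 0%Z.
  destruct (local_oriented_hexagon r Hr Hs 0) as (X & A & B & C & HO & H0).
  change (r 0%Z) with (r (0 + 0)%Z). rewrite !H0.
  assert (p = 1 \/ p = 2 \/ p = 3 \/ p = 4 \/ p = 5)%Z as [-> | [-> | [-> | [-> | ->]]]]
    by lia;
    unfold hexagon; simpl; coordinates; intro E; injection E; intros;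
    destruct HO as [(? & ? & ?) | (? & ? & ?)]; nra.
Qed.

Lemma convex_of_same_sign r : tang_antiperiodic r -> turns_same_sign r -> convex r.
Proof.
  intros Hr Hs k.
  destruct (local_oriented_hexagon r Hr Hs k) as (X & A & B & C & HO & Hk).
  assert (Hj : forall j, exists m, (0 <= m < 6)%Z /\ r j = hexagon X A B C m).
  { intro j. exists ((j - k) mod 6)%Z. split; [apply Z.mod_pos_bound; lia|].
    rewrite <- hexagon_mod6, <- Hk. f_equal. ring. }
  unfold tang. localize r k Hk.
  destruct HO as [(? & ? & ?) | (? & ? & ?)]; [left | right]; intro j;
    destruct (Hj j) as (m & Hm & ->);
    destruct (Z_cases6 m Hm) as [-> | [-> | [-> | [-> | [-> | ->]]]]];
    unfold hexagon; simpl; coordinates; lra.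
Qed.

Lemma pl_det (r : curve) j1 u1 j2 u2 : pl r j1 u1 = pl r j2 u2 ->
  (1 - u1) * det (tang r j2) (vsub (r j1) (r j2)) +
  u1 * det (tang r j2) (vsub (r (j1 + 1)%Z) (r j2)) = 0.
Proof.
  intro E.
  transitivity (det (tang r j2) (vsub (pl r j1 u1) (r j2))).
  - unfold pl, tang, vadd, vsub, vscale, det; cbn [fst snd]; ring.
  - rewrite E. unfold pl, vadd, vsub, vscale, det; cbn [fst snd]; ring.
Qed.

Lemma pl_injective (r : curve) j u1 u2 :
  turn r j <> 0 -> pl r j u1 = pl r j u2 -> u1 = u2.
Proof.
  intros Hj E.
  assert (H : (u1 - u2) * turn r j = det (tang r (j - 1)) (vsub (pl r j u1) (pl r j u2))).
  { unfold turn, pl, vadd, vsub, vscale, det; cbn [fst snd]; ring. }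
  rewrite E in H. unfold det, vsub in H; cbn [fst snd] in H.
  assert (H0 : (u1 - u2) * turn r j = 0) by lra.
  apply Rmult_integral in H0 as [H0 | H0]; lra.
Qed.

(* On different sides, [pl_det] read from either side writes 0 as a convex
   combination of determinants that strict convexity makes nonzero of one sign. *)
Lemma simple_of_same_sign r : tang_antiperiodic r -> turns_same_sign r -> simple r 6.
Proof.
  intros Hr Hs k j1 j2 u1 u2 Hj1 Hj2 Hu1 Hu2 E.
  destruct (Z.eq_dec j1 j2) as [<- | Hne].
  { split; [reflexivity|]. apply (pl_injective r j1); [|exact E].
    apply nondegenerate_of_same_sign, Hs. }
  exfalso.
  pose proof (pl_det r j1 u1 j2 u2 E) as D1.
  pose proof (pl_det r j2 u2 j1 u1 (eq_sym E)) as D2.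
  destruct (local_oriented_hexagon r Hr Hs k) as (X & A & B & C & HO & Hk).
  revert D1 D2. unfold tang.
  replace j1 with (k + (j1 - k))%Z in * by ring.
  replace j2 with (k + (j2 - k))%Z in * by ring.
  destruct (Z_cases6 (j1 - k) ltac:(lia)) as [E1 | [E1 | [E1 | [E1 | [E1 | E1]]]]];
  destruct (Z_cases6 (j2 - k) ltac:(lia)) as [E2 | [E2 | [E2 | [E2 | [E2 | E2]]]]];
  try lia;
  rewrite E1, E2; localize r k Hk; coordinates; intros D1 D2;
  destruct HO as [(? & ? & ?) | (? & ? & ?)]; nra.
Qed.

Lemma same_sign_of_convex r : nondegenerate r -> convex r -> turns_same_sign r.
Proof.
  intros Hnd Hcv k.
  assert (V1 : det (tang r k) (vsub (r (k + 2)%Z) (r k)) = turn r (k + 1)).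
  { unfold turn, tang. replace (k + 1 - 1)%Z with k by ring.
    replace (k + 1 + 1)%Z with (k + 2)%Z by ring. unfold det, vsub; cbn [fst snd]; ring. }
  assert (V2 : det (tang r k) (vsub (r (k - 1)%Z) (r k)) = turn r k).
  { unfold turn, tang. replace (k - 1 + 1)%Z with k by ring.
    unfold det, vsub; cbn [fst snd]; ring. }
  pose proof (Hnd k) as N0. pose proof (Hnd (k + 1)%Z) as N1.
  fold (turn r k) (turn r (k + 1)) in N0, N1.
  destruct (Hcv k) as [Hc | Hc];
    pose proof (Hc (k + 2)%Z) as C1; pose proof (Hc (k - 1)%Z) as C2;
    rewrite V1 in C1; rewrite V2 in C2.
  - assert (0 < turn r k) by (destruct C2; [assumption | congruence]).
    assert (0 < turn r (k + 1)) by (destruct C1; [assumption | congruence]).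
    nra.
  - assert (turn r k < 0) by (destruct C2; [assumption | congruence]).
    assert (turn r (k + 1) < 0) by (destruct C1; [assumption | congruence]).
    nra.
Qed.

Lemma par_hexagon_iff r : par_hexagon r <-> tang_antiperiodic r /\ turns_same_sign r.
Proof.
  split.
  - intros (Hnd & _ & _ & Hcv & Hr). auto using same_sign_of_convex.
  - intros [Hr Hs].
    split; [now apply nondegenerate_of_same_sign |].
    split; [now apply closed_period6_of_same_sign |].
    split; [now apply simple_of_same_sign |].
    split; [now apply convex_of_same_sign | exact Hr].
Qed.

Lemma Pwd_of_same_sign r : tang_antiperiodic r -> turns_same_sign r -> Pwd r.
Proof.
  intros Hr Hs k. destruct (local_oriented_hexagon r Hr Hs k) as (X & A & B & C & HO & Hk).
  unfold lines_meet. localize r k Hk. coordinates.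
  destruct HO as [(? & ? & ?) | (? & ? & ?)]; lra.
Qed.

Lemma Qwd_of_same_sign r : tang_antiperiodic r -> turns_same_sign r -> Qwd r.
Proof.
  intros Hr Hs k. destruct (local_oriented_hexagon r Hr Hs k) as (X & A & B & C & HO & Hk).
  unfold lines_meet. localize r k Hk. coordinates.
  destruct HO as [(? & ? & ?) | (? & ? & ?)]; lra.
Qed.

Lemma tang_antiperiodic_Pmap r : tang_antiperiodic r -> turns_same_sign r ->
  tang_antiperiodic (Pmap r).
Proof.
  intros Hr Hs k. destruct (local_oriented_hexagon r Hr Hs k) as (X & A & B & C & HO & Hk).
  unfold tang, Pmap. localize r k Hk. coordinates.
  apply injective_projections; cbn [fst snd]; field;
    destruct HO as [(? & ? & ?) | (? & ? & ?)]; repeat split; lra.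
Qed.

Lemma tang_antiperiodic_Qmap r : tang_antiperiodic r -> turns_same_sign r ->
  tang_antiperiodic (Qmap r).
Proof.
  intros Hr Hs k. destruct (local_oriented_hexagon r Hr Hs k) as (X & A & B & C & HO & Hk).
  unfold tang, Qmap. localize r k Hk. coordinates.
  apply injective_projections; cbn [fst snd]; field;
    destruct HO as [(? & ? & ?) | (? & ? & ?)]; repeat split; lra.
Qed.

Lemma turn_Pmap r : tang_antiperiodic r -> turns_same_sign r -> forall k,
  turn (Pmap r) k
  = turn r k * turn r (k + 1) / (turn r (k - 1) + turn r k + turn r (k + 1)).
Proof.
  intros Hr Hs k. destruct (local_oriented_hexagon r Hr Hs k) as (X & A & B & C & HO & Hk).
  unfold turn, tang, Pmap. localize r k Hk. coordinates.
  field; destruct HO as [(? & ? & ?) | (? & ? & ?)]; repeat split; lra.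
Qed.

Lemma turn_Qmap r : tang_antiperiodic r -> turns_same_sign r -> forall k,
  turn (Qmap r) k = (turn r (k - 1) * turn r k + turn r k * turn r (k + 1)
                     + turn r (k + 1) * turn r (k - 1)) / turn r (k - 1).
Proof.
  intros Hr Hs k. destruct (local_oriented_hexagon r Hr Hs k) as (X & A & B & C & HO & Hk).
  unfold turn, tang, Qmap. localize r k Hk. coordinates.
  field; destruct HO as [(? & ? & ?) | (? & ? & ?)]; repeat split; lra.
Qed.

Lemma turn_add3 r : tang_antiperiodic r -> forall k, turn r (k + 3)%Z = turn r k.
Proof.
  intros Hr k. unfold turn.
  replace (k + 3 - 1)%Z with (k - 1 + 3)%Z by ring.
  rewrite !Hr. unfold det, vopp; cbn [fst snd]; ring.
Qed.

Lemma turn_window_invariant r (F : R -> R -> R -> R) : tang_antiperiodic r ->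
  (forall x y z, F x y z = F y z x) ->
  forall k, F (turn r (k - 1)) (turn r k) (turn r (k + 1))
            = F (turn r (-1)) (turn r 0) (turn r 1).
Proof.
  intros Hr HF k.
  set (f := fun k => F (turn r (k - 1)) (turn r k) (turn r (k + 1))).
  assert (Hf : forall k, f (k + 1)%Z = f k).
  { intro i. unfold f. replace (i + 1 - 1)%Z with i by ring.
    replace (i + 1 + 1)%Z with (i - 1 + 3)%Z by ring.
    rewrite turn_add3 by exact Hr. symmetry. apply HF. }
  change (f k = f 0%Z).
  rewrite <- (periodic_add_mul f 1 Hf 0 k). f_equal. ring.
Qed.

Lemma turns_same_sign_quadratic r r' :
  turns_same_sign r -> quadratic_turns r r' -> turns_same_sign r'.
Proof.
  intros Hs (c & Hc & Hr') k. rewrite !Hr'.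
  pose proof (Hs k) as S0. pose proof (Hs (k + 1)%Z) as S1.
  pose proof (Rsqr_pos_lt c Hc) as Hc2. unfold Rsqr in Hc2.
  replace (c * (turn r k * turn r (k + 1)) * (c * (turn r (k + 1) * turn r (k + 1 + 1))))
    with ((c * c) * ((turn r k * turn r (k + 1)) * (turn r (k + 1) * turn r (k + 1 + 1))))
    by ring.
  apply Rmult_lt_0_compat; [exact Hc2 | now apply Rmult_lt_0_compat].
Qed.

Lemma quadratic_turns_Pmap r : tang_antiperiodic r -> turns_same_sign r ->
  quadratic_turns r (Pmap r).
Proof.
  intros Hr Hs.
  set (S := turn r (-1) + turn r 0 + turn r 1).
  assert (HS : S <> 0).
  { pose proof (Hs (-1)%Z) as S1. pose proof (Hs 0%Z) as S2.
    change (-1 + 1)%Z with 0%Z in S1. change (0 + 1)%Z with 1%Z in S2.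
    destruct (same_sign3 _ _ _ S1 S2) as [(? & ? & ?) | (? & ? & ?)]; unfold S; lra. }
  exists (/ S). split; [now apply Rinv_neq_0_compat|].
  intro k. rewrite turn_Pmap by assumption.
  rewrite (turn_window_invariant r (fun x y z => x + y + z))
    by (assumption || (intros; ring)).
  fold S. unfold Rdiv. ring.
Qed.

Lemma quadratic_turns_Qmap r : tang_antiperiodic r -> turns_same_sign r ->
  quadratic_turns r (Qmap r).
Proof.
  intros Hr Hs.
  set (S := turn r (-1) * turn r 0 + turn r 0 * turn r 1 + turn r 1 * turn r (-1)).
  set (P := turn r (-1) * turn r 0 * turn r 1).
  assert (HSP : S <> 0 /\ P <> 0).
  { pose proof (Hs (-1)%Z) as S1. pose proof (Hs 0%Z) as S2.
    change (-1 + 1)%Z with 0%Z in S1. change (0 + 1)%Z with 1%Z in S2.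
    unfold S, P. destruct (same_sign3 _ _ _ S1 S2) as [(? & ? & ?) | (? & ? & ?)];
      split; nra. }
  destruct HSP as [HS HP0].
  exists (S / P). split.
  { unfold Rdiv. apply Rmult_integral_contrapositive.
    split; [assumption | now apply Rinv_neq_0_compat]. }
  intro k. rewrite turn_Qmap by assumption.
  rewrite (turn_window_invariant r (fun x y z => x * y + y * z + z * x))
    by (assumption || (intros; ring)).
  fold S.
  assert (HP : turn r (k - 1) * turn r k * turn r (k + 1) = P).
  { apply (turn_window_invariant r (fun x y z => x * y * z)); [assumption | intros; ring]. }
  pose proof (Hs (k - 1)%Z) as S1. pose proof (Hs k) as S2.
  replace (k - 1 + 1)%Z with k in S1 by ring.
  rewrite <- HP. field.
  destruct (same_sign3 _ _ _ S1 S2) as [(? & ? & ?) | (? & ? & ?)]; repeat split; lra.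
Qed.

Lemma Pmap_step r : tang_antiperiodic r -> turns_same_sign r ->
  Pwd r /\ tang_antiperiodic (Pmap r) /\ quadratic_turns r (Pmap r).
Proof.
  intros Hr Hs.
  auto using Pwd_of_same_sign, tang_antiperiodic_Pmap, quadratic_turns_Pmap.
Qed.

Lemma Qmap_step r : tang_antiperiodic r -> turns_same_sign r ->
  Qwd r /\ tang_antiperiodic (Qmap r) /\ quadratic_turns r (Qmap r).
Proof.
  intros Hr Hs.
  auto using Qwd_of_same_sign, tang_antiperiodic_Qmap, quadratic_turns_Qmap.
Qed.

Lemma kappa_turn r k : kappa r k = turn r (k + 1) / turn r k.
Proof. unfold kappa, turn. now replace (k + 1 - 1)%Z with k by ring. Qed.

Lemma kappabar_turn r : tang_antiperiodic r -> forall k,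
  kappabar r k = turn r (k - 1) / turn r k.
Proof.
  intros Hr k. unfold kappabar, turn. f_equal.
  replace (k - 1 - 1)%Z with (k - 2)%Z by ring.
  replace (k + 1)%Z with (k - 2 + 3)%Z by ring.
  rewrite Hr. unfold det, vopp; cbn [fst snd]; ring.
Qed.

Lemma kappa_quadratic_twice r r1 r2 :
  tang_antiperiodic r -> tang_antiperiodic r2 -> turns_same_sign r ->
  quadratic_turns r r1 -> quadratic_turns r1 r2 ->
  forall n, kappa r2 n = kappa r (n + 1) /\ kappabar r2 n = kappabar r (n + 1).
Proof.
  intros Hr Hr2 Hs (c1 & Hc1 & H1) (c2 & Hc2 & H2) n.
  assert (T2 : forall k, turn r2 k = c2 * c1 * c1 *
    (turn r k * turn r (k + 1)%Z * turn r (k + 1)%Z * turn r (k + 2)%Z)).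
  { intro k. rewrite H2, !H1. replace (k + 1 + 1)%Z with (k + 2)%Z by ring. ring. }
  assert (E3 : turn r (n + 3)%Z = turn r n) by apply turn_add3, Hr.
  assert (E2 : turn r (n + 2)%Z = turn r (n - 1)%Z).
  { replace (n + 2)%Z with (n - 1 + 3)%Z by ring. apply turn_add3, Hr. }
  pose proof (Hs (n - 1)%Z) as S1. pose proof (Hs n) as S2.
  replace (n - 1 + 1)%Z with n in S1 by ring.
  rewrite !kappa_turn, !kappabar_turn, !T2 by assumption.
  replace (n + 1 + 1)%Z with (n + 2)%Z by ring.
  replace (n + 1 + 2)%Z with (n + 3)%Z by ring.
  replace (n - 1 + 1)%Z with n by ring.
  replace (n - 1 + 2)%Z with (n + 1)%Z by ring.
  replace (n + 1 - 1)%Z with n by ring.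
  rewrite E2, E3.
  destruct (same_sign3 _ _ _ S1 S2) as [(? & ? & ?) | (? & ? & ?)];
    split; field; repeat split; auto; lra.
Qed.

Lemma iterate_twice_par_hexagon (F : curve -> curve) (Fwd : curve -> Prop) :
  (forall r, tang_antiperiodic r -> turns_same_sign r ->
     Fwd r /\ tang_antiperiodic (F r) /\ quadratic_turns r (F r)) ->
  forall r, par_hexagon r ->
    (Fwd r /\ par_hexagon (F r) /\ Fwd (F r) /\ par_hexagon (F (F r))) /\
    forall n, kappa (F (F r)) n = kappa r (n + 1) /\
              kappabar (F (F r)) n = kappabar r (n + 1).
Proof.
  intros HF r Hpar. apply par_hexagon_iff in Hpar as [Hr Hs].
  destruct (HF r Hr Hs) as (Hw & Hr1 & Hq1).
  pose proof (turns_same_sign_quadratic r (F r) Hs Hq1) as Hs1.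
  destruct (HF (F r) Hr1 Hs1) as (Hw1 & Hr2 & Hq2).
  pose proof (turns_same_sign_quadratic (F r) (F (F r)) Hs1 Hq2) as Hs2.
  split.
  - rewrite !par_hexagon_iff. tauto.
  - exact (kappa_quadratic_twice r (F r) (F (F r)) Hr Hr2 Hs Hq1 Hq2).
Qed.

Theorem proposition7p12 (r : curve) :
  par_hexagon r ->
  (Pwd r /\ par_hexagon (Pmap r) /\ Pwd (Pmap r) /\ par_hexagon (Pmap (Pmap r))) /\
  (Qwd r /\ par_hexagon (Qmap r) /\ Qwd (Qmap r) /\ par_hexagon (Qmap (Qmap r))) /\
  (exists s s' : Z, forall n : Z,
     kappa (Pmap (Pmap r)) n = kappa r (n + s)%Z /\
     kappabar (Pmap (Pmap r)) n = kappabar r (n + s)%Z /\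
     kappa (Qmap (Qmap r)) n = kappa r (n + s')%Z /\
     kappabar (Qmap (Qmap r)) n = kappabar r (n + s')%Z).
Proof.
  intros Hpar.
  destruct (iterate_twice_par_hexagon Pmap Pwd Pmap_step r Hpar) as [HP HkP].
  destruct (iterate_twice_par_hexagon Qmap Qwd Qmap_step r Hpar) as [HQ HkQ].
  split; [exact HP | split; [exact HQ |]].
  exists 1%Z, 1%Z. intro n.
  destruct (HkP n), (HkQ n). auto.
Qed.
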